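(* Let $t\ge1$ and $G=\prod_{i=1}^t K_{n_i}$ with all $n_i\ge2$. Then $$\gamma(G)\le 2^t-A(t,2,t-1)\le 3\cdot 2^{t-2}.$$
   Context: Vertices of $\prod_{i=1}^t K_{n_i}$ are tuples $(x_1,\dots,x_t)$ with $x_i\in\{0,\dots,n_i-1\}$, adjacent iff they differ in every coordinate. $\gamma(G)$ is the domination number: the minimum size of a set $D$ such that every vertex is in $D$ or adjacent to a vertex of $D$. $A(t,d,t-1)$ denotes the maximum number of binary vectors of length $t$ such that any two distinct ones have Hamming distance between $d$ and $t-1$ inclusive. *)

From mathcomp Require Import all_boot.
Set Implicit Arguments. Unset Strict Implicit. Unset Printing Implicit Defensive.

Definition prodK_vertex (t : nat) (n : 'I_t -> nat) : finType :=
  {dffun forall i : 'I_t, 'I_(n i)}.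

Definition prodK_adj (t : nat) (n : 'I_t -> nat) (x y : prodK_vertex n) : bool :=
  [forall i, x i != y i].

Definition prodK_dominating (t : nat) (n : 'I_t -> nat) (D : {set prodK_vertex n}) : bool :=
  [forall v, (v \in D) || [exists u in D, prodK_adj u v]].

(* Domination number: minimum size of a dominating set (the whole vertex set dominates). *)
Definition prodK_gamma (t : nat) (n : 'I_t -> nat) : nat :=
  \big[minn/#|prodK_vertex n|]_(D : {set prodK_vertex n} | prodK_dominating D) #|D|.

Definition hamming (t : nat) (x y : {ffun 'I_t -> bool}) : nat :=
  #|[set i | x i != y i]|.

Definition code_dist_in (t d u : nat) (S : {set {ffun 'I_t -> bool}}) : bool :=
  [forall x in S, forall y in S, (x != y) ==> (d <= hamming x y <= u)].

Definition A_code (t d u : nat) : nat :=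
  \max_(S : {set {ffun 'I_t -> bool}} | code_dist_in d u S) #|S|.

From mathcomp Require Import all_boot all_order zify.
Import Order.TTheory.
Set Implicit Arguments.
Unset Strict Implicit.
Unset Printing Implicit Defensive.

(* Embed {0,1}^t into the vertex set and take the complement D of an optimal
   code C with distances in [2, t-1]. A vertex v is adjacent to the embedded
   word u marking the zero coordinates of v. If u lies in C, then either some
   coordinate of v is >= 2, and flipping u there keeps adjacency while moving to
   distance 1 from u, hence out of C; or v is itself a binary word, at distance
   t from u, hence v is in D. For the second inequality, the even-weight words
   vanishing at a fixed coordinate form such a code of size 2^(t-2). *)

Lemma card_le_mul_of_injective_moves (T I : finType) (S : {set T})
    (h : I -> T -> T) (c : T -> I) :
  (forall i, injective (h i)) -> (forall x, h (c x) x \in S) ->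
  #|T| <= #|I| * #|S|.
Proof.
move=> h_inj hcS; pose f x := (c x, h (c x) x).
have f_inj : injective f by move=> x y [cxy]; rewrite cxy => /h_inj.
rewrite -(cardsT I) -cardsX -(cardsT T) -(card_imset _ f_inj).
apply: subset_leq_card.
by apply/subsetP => _ /imsetP[x _ ->]; rewrite inE /= in_setT hcS.
Qed.

Section BinaryWords.

Variable t : nat.
Local Notation word := {ffun 'I_t -> bool}.

Lemma card_word : #|word| = 2 ^ t.
Proof. by rewrite card_ffun card_bool card_ord. Qed.

Definition weight (x : word) : nat := #|[set i | x i]|.

Lemma hamming_eq0 (x y : word) : (hamming x y == 0) = (x == y).
Proof.
rewrite cards_eq0; apply/eqP/eqP => [/setP xy | -> ]; last first.
  by apply/setP => i; rewrite !inE eqxx.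
by apply/ffunP => i; have := xy i; rewrite !inE => /negbFE/eqP.
Qed.

Lemma odd_hamming (x y : word) :
  odd (hamming x y) = odd (weight x) (+) odd (weight y).
Proof.
have card_setE (P : pred 'I_t) : #|[set i | P i]| = \sum_i P i.
  by rewrite -sum1dep_card big_mkcond; apply: eq_bigr => i _; case: (P i).
have : hamming x y + 2 * \sum_i (x i && y i) = weight x + weight y.
  rewrite /hamming /weight !card_setE big_distrr -!big_split.
  by apply: eq_bigr => i _; case: (x i); case: (y i).
by move/(congr1 odd); rewrite oddD oddM andFb addbF oddD.
Qed.

Definition flip (j : 'I_t) (x : word) : word := [ffun i => x i (+) (i == j)].

Lemma flipK j : involutive (flip j).
Proof. by move=> x; apply/ffunP => i; rewrite !ffunE -addbA addbb addbF. Qed.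

Lemma flip_id j x : flip j x j = ~~ x j.
Proof. by rewrite ffunE eqxx addbT. Qed.

Lemma flip_neq j x i : i != j -> flip j x i = x i.
Proof. by rewrite ffunE => /negbTE->; rewrite addbF. Qed.

Lemma hamming_flip j x : hamming x (flip j x) = 1.
Proof.
rewrite /hamming -(cards1 j); apply: eq_card => i.
by rewrite !inE ffunE; case: (i == j); case: (x i).
Qed.

Lemma odd_weight_flip j x : odd (weight (flip j x)) = ~~ odd (weight x).
Proof.
have := odd_hamming x (flip j x); rewrite hamming_flip /=.
by case: (odd (weight x)); case: (odd (weight _)).
Qed.

Lemma code_dist_inP d u (C : {set word}) :
  reflect (forall x y, x \in C -> y \in C -> x != y -> d <= hamming x y <= u)
          (code_dist_in d u C).
Proof.
apply: (iffP forall_inP) => [C_d x y xC yC | C_d x xC].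
  by move/forall_inP/(_ y yC)/implyP: (C_d x xC); apply.
by apply/forall_inP => y yC; apply/implyP; apply: C_d.
Qed.

Lemma notin_code d u (C : {set word}) x y :
  code_dist_in d u C -> x \in C -> 0 < hamming x y ->
  ~~ (d <= hamming x y <= u) -> y \notin C.
Proof.
move=> /code_dist_inP C_d xC xy_gt0 xy_out; apply: contra xy_out => yC.
by apply: C_d; rewrite // -hamming_eq0 -lt0n.
Qed.

Lemma A_code_ge d u (C : {set word}) :
  code_dist_in d u C -> #|C| <= A_code t d u.
Proof. exact: leq_bigmax_cond. Qed.

Lemma A_code_attained d u :
  exists2 C : {set word}, code_dist_in d u C & #|C| = A_code t d u.
Proof.
have set0_code : code_dist_in d u (set0 : {set word}).
  by apply/code_dist_inP => x y; rewrite inE.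
have code_exists : 0 < #|@code_dist_in t d u| by apply/card_gt0P; exists set0.
have [C C_code C_max] :=
  eq_bigmax_cond (fun S : {set word} => #|S|) code_exists.
by exists C; rewrite // /A_code C_max.
Qed.

End BinaryWords.

Section Domination.

Variables (t : nat) (n : 'I_t -> nat).
Hypothesis n_gt1 : forall i, 1 < n i.
Local Notation word := {ffun 'I_t -> bool}.

Lemma prodK_gamma_le (D : {set prodK_vertex n}) :
  prodK_dominating D -> prodK_gamma n <= #|D|.
Proof.
rewrite /prodK_gamma -minEnat => D_dom.
exact: (bigmin_le_cond _ (fun S : {set _} => #|S|) D_dom).
Qed.

Definition vertex_of_word (b : word) : prodK_vertex n :=
  @finfun _ (fun i => 'I_(n i))
    (fun i => Ordinal (leq_ltn_trans (leq_b1 (b i)) (n_gt1 i))).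

Lemma vertex_of_wordE b i : vertex_of_word b i = b i :> nat.
Proof. by rewrite ffunE. Qed.

Lemma vertex_of_word_inj : injective vertex_of_word.
Proof.
move=> b1 b2 eq_b; apply/ffunP => i.
have := vertex_of_wordE b1 i; rewrite eq_b vertex_of_wordE => /eqP.
by case: (b1 i); case: (b2 i).
Qed.

Lemma prodK_adj_vertex_of_word (u : word) (v : prodK_vertex n) :
  (forall i, u i != v i :> nat) -> prodK_adj (vertex_of_word u) v.
Proof.
by move=> u_v; apply/forallP => i; rewrite -val_eqE /= vertex_of_wordE.
Qed.

Definition zero_pattern (v : prodK_vertex n) : word :=
  [ffun i => v i == 0 :> nat].

Lemma prodK_adj_zero_pattern (v : prodK_vertex n) :
  prodK_adj (vertex_of_word (zero_pattern v)) v.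
Proof.
apply: prodK_adj_vertex_of_word => i.
by rewrite ffunE; case: (nat_of_ord (v i)).
Qed.

Lemma prodK_adj_flip_zero_pattern (v : prodK_vertex n) j : 1 < v j ->
  prodK_adj (vertex_of_word (flip j (zero_pattern v))) v.
Proof.
move=> vj_gt1; apply: prodK_adj_vertex_of_word => i.
have [-> | ij] := eqVneq i j; last first.
  by rewrite flip_neq // ffunE; case: (nat_of_ord (v i)).
by rewrite flip_id ffunE; move: vj_gt1; case: (nat_of_ord (v j)) => [|[|]].
Qed.

Lemma binary_vertexE (v : prodK_vertex n) : (forall i, v i < 2) ->
  v = vertex_of_word [ffun i => ~~ zero_pattern v i].
Proof.
move=> v_lt2; apply/ffunP => i; apply/val_inj.
rewrite /= vertex_of_wordE !ffunE.
by move: (v_lt2 i); case: (nat_of_ord (v i)) => [|[|]].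
Qed.

Lemma code_complement_dominating (C : {set word}) :
  0 < t -> code_dist_in 2 t.-1 C -> prodK_dominating (vertex_of_word @: ~: C).
Proof.
move=> t_gt0 C_code; apply/forallP => v; set u := zero_pattern v.
have adj_notin (w : word) : w \notin C -> prodK_adj (vertex_of_word w) v ->
    [exists x in vertex_of_word @: ~: C, prodK_adj x v].
  move=> wC w_v; apply/existsP; exists (vertex_of_word w).
  by rewrite imset_f ?inE.
have [uC | uC] := boolP (u \in C); last first.
  by rewrite (adj_notin u) ?orbT ?prodK_adj_zero_pattern.
have [/existsP[j vj_gt1] | /existsPn v_le1] := boolP [exists j, 1 < v j].
  rewrite (adj_notin (flip j u)) ?orbT ?prodK_adj_flip_zero_pattern //.
  by apply: (notin_code C_code uC); rewrite hamming_flip.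
have v_lt2 i : v i < 2 by rewrite ltnNge v_le1.
set w : word := [ffun i => ~~ u i].
have uw_t : hamming u w = t.
  rewrite /hamming -[in RHS](card_ord t) -cardsT; apply: eq_card => i.
  by rewrite !inE /w !ffunE; case: (_ == 0).
apply/orP; left; rewrite (binary_vertexE v_lt2) imset_f // inE.
by apply: (notin_code C_code uC); rewrite uw_t //; lia.
Qed.

Lemma prodK_gamma_le_code (C : {set word}) :
  0 < t -> code_dist_in 2 t.-1 C -> prodK_gamma n <= 2 ^ t - #|C|.
Proof.
move=> t_gt0 C_code.
apply: leq_trans (prodK_gamma_le (code_complement_dominating t_gt0 C_code)) _.
rewrite card_imset; last exact: vertex_of_word_inj.
by rewrite -card_word -(cardsC C) addKn.
Qed.

End Domination.

Section EvenCode.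

Variables (t : nat) (i0 : 'I_t).
Local Notation word := {ffun 'I_t -> bool}.

Definition even_code : {set word} :=
  [set x : word | ~~ x i0 && ~~ odd (weight x)].

Lemma even_code_dist : code_dist_in 2 t.-1 even_code.
Proof.
apply/code_dist_inP => x y.
rewrite !inE => /andP[/negbTE x0 ex] /andP[/negbTE y0 ey] xy.
apply/andP; split.
  have := odd_hamming x y; rewrite (negbTE ex) (negbTE ey).
  by move: xy; rewrite -hamming_eq0; case: (hamming x y) => [|[]].
apply: (@leq_trans #|[set~ i0]|); last by rewrite cardsC1 card_ord.
apply/subset_leq_card/subsetP => i; rewrite !inE.
by apply: contraNneq => ->; rewrite x0 y0 eqxx.
Qed.

Lemma even_code_large : 2 ^ t <= 4 * #|even_code|.
Proof.
have [t_le1 | t_gt1] := leqP t 1.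
  have code_gt0 : 0 < #|even_code|.
    apply/card_gt0P; exists [ffun=> false]; rewrite inE ffunE /weight.
    by rewrite (eq_card0 (A := [set i | _])) // => i; rewrite !inE ffunE.
  by apply: leq_trans (leq_pexp2l (isT : 0 < 2) t_le1) _; rewrite expn1; lia.
have [i1 i10] : exists i1, i1 != i0.
  have : 0 < #|[set~ i0]| by rewrite cardsC1 card_ord; lia.
  by case/card_gt0P => i1; rewrite in_setC1; exists i1.
pose flip_if (b : bool) (j : 'I_t) (x : word) := if b then flip j x else x.
have flip_if_inj b j : injective (flip_if b j).
  by case: b => /=; [apply: can_inj (flipK j) | ].
pose h (ab : bool * bool) x := flip_if ab.1 i0 (flip_if ab.2 i1 x).
pose c (x : word) := (x i0, odd (weight x) (+) x i0).
have h_inj ab : injective (h ab) by move=> x y /flip_if_inj/flip_if_inj.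
have hcS x : h (c x) x \in even_code.
  rewrite inE /h /c /flip_if /=.
  by case x0: (x i0); case ox: (odd (weight x));
    rewrite /= ?flip_id ?flip_neq ?odd_weight_flip ?x0 ?ox // eq_sym.
have := card_le_mul_of_injective_moves h_inj hcS.
by rewrite card_word card_prod card_bool.
Qed.

End EvenCode.

Theorem corollary4p6 (t : nat) (n : 'I_t -> nat) :
  1 <= t -> (forall i, 2 <= n i) ->
  prodK_gamma n <= 2 ^ t - A_code t 2 t.-1 /\
  4 * (2 ^ t - A_code t 2 t.-1) <= 3 * 2 ^ t.
Proof.
move=> t_gt0 n_gt1; split.
  have [C C_code <-] := A_code_attained t 2 t.-1.
  exact: prodK_gamma_le_code.
have := A_code_ge (even_code_dist (Ordinal t_gt0)).
have := even_code_large (Ordinal t_gt0).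
lia.
Qed.
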